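(* Let $f:\mathbb{R}^n\to\mathbb{R}$ be subdifferentiable with subgradient Lipschitz continuous with constant $L>0$ (i.e. $\|g_x-g_y\|\le L\|x-y\|$ for all $x,y$, $g_x\in\partial f(x)$, $g_y\in\partial f(y)$). Let $x_0\in\mathbb{R}^n$ and suppose $\Omega=\{x: f(x)\le f(x_0)\}$ is compact and $f(x)\ge C$ on $\Omega$ for some constant $C$. Let $M\ge0$ be an integer, $0<\gamma<1$, and $(\eta_k)$ positive with $\sum_k\eta_k<\infty$. Let $x_{k+1}=x_k+\alpha_kd_k$, where $g_k\in\partial f(x_k)$, $d_k$ is a search direction, and $\alpha_k=(1/2)^{h_k}$ with $h_k$ the smallest integer in $\{0,1,2,\dots\}$ such that $$f(x_k+\alpha_k d_k)\le \max_{0\le j\le \min\{k,M\}} f(x_{k-j})+\gamma\alpha_k g_k^Td_k+\eta_k .$$ Suppose the search directions satisfy, for all $k$: (1) $\mu\|g_k\|\le\|d_k\|\le\nu$ for some constants $\mu,\nu>0$; and (2) $\dfrac{d_k^Tg_k}{\|d_k\|\,\|g_k\|}\le-\epsilon$ for some $\epsilon>0$. Then $$\liminf_{k\to\infty}\|g_k\|=0 .$$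
   Context: A subgradient of $f$ at $x$ is any $g\in\mathbb{R}^n$ with $f(y)\ge f(x)+g^T(y-x)$ for all $y$; $\partial f(x)$ is the set of subgradients at $x$, and $f$ is subdifferentiable if $\partial f(x)\neq\emptyset$ everywhere. *)

From HB Require Import structures.
From mathcomp Require Import all_boot all_order all_algebra.
From mathcomp Require Import all_classical all_reals all_analysis.
Set Implicit Arguments. Unset Strict Implicit. Unset Printing Implicit Defensive.
Import Order.TTheory GRing.Theory Num.Theory.
Local Open Scope ring_scope.
Local Open Scope classical_set_scope.

Definition dotv {R : realType} {n : nat} (u v : 'rV[R]_n) : R :=
  \sum_(i < n) u ord0 i * v ord0 i.
Definition enorm {R : realType} {n : nat} (u : 'rV[R]_n) : R :=
  Num.sqrt (dotv u u).

Definition is_subgradient {R : realType} {n : nat} (f : 'rV[R]_n -> R)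
  (x g : 'rV[R]_n) : Prop :=
  forall y, f x + dotv g (y - x) <= f y.

Definition subdiff {R : realType} {n : nat} (f : 'rV[R]_n -> R) (x : 'rV[R]_n)
  : set 'rV[R]_n := [set g | is_subgradient f x g].

Definition subdifferentiable {R : realType} {n : nat} (f : 'rV[R]_n -> R) : Prop :=
  forall x, subdiff f x !=set0.

Definition nm_max {R : realType} {n : nat} (f : 'rV[R]_n -> R)
  (x : nat -> 'rV[R]_n) (M k : nat) : R :=
  \big[Num.max/f (x k)]_(j < (minn k M).+1) f (x (k - j)%N).

Definition armijo_ok {R : realType} {n : nat} (f : 'rV[R]_n -> R)
  (x g d : nat -> 'rV[R]_n) (eta : nat -> R) (M : nat) (gamma : R)
  (k h : nat) : Prop :=
  f (x k + ((1/2 : R) ^+ h) *: d k)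
    <= nm_max f x M k + gamma * ((1/2 : R) ^+ h) * dotv (g k) (d k) + eta k.

(* If ‖g_k‖ ≥ δ > 0 from some point on, the directions are uniformly descent
   directions, and the backtracking steps stay above a fixed a > 0: a rejected
   trial step a' has (1 - γ) ε ‖g_k‖ ≤ L a' ν, because a Lipschitz subgradient
   gives the quadratic upper bound f(x + d) ≤ f(x) + g·d + L‖d‖².  Each new
   value f(x_{k+1}) then lies a fixed amount below the maximum of the last
   M + 1 values once η_k is small, so this maximum drops by a fixed amount
   every M + 1 iterations and f(x_k) → -∞, which is impossible since f is
   bounded below. *)
From mathcomp Require Import all_boot all_order all_algebra.
From mathcomp Require Import all_classical all_reals all_analysis.
From mathcomp Require Import lra zify.
Import Order.TTheory GRing.Theory Num.Theory.
Local Open Scope ring_scope.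
Local Open Scope classical_set_scope.
Import numFieldNormedType.Exports.

Set Implicit Arguments.
Unset Strict Implicit.
Unset Printing Implicit Defensive.

Section EuclideanNorm.
Context {R : realType} {n : nat}.
Implicit Types u v w : 'rV[R]_n.

Lemma dotvC u v : dotv u v = dotv v u.
Proof. by apply: eq_bigr => i _; rewrite mulrC. Qed.

Lemma dotvDl u v w : dotv (u + v) w = dotv u w + dotv v w.
Proof. by rewrite /dotv -big_split; apply: eq_bigr => i _; rewrite !mxE mulrDl. Qed.

Lemma dotvZl a u w : dotv (a *: u) w = a * dotv u w.
Proof. by rewrite /dotv mulr_sumr; apply: eq_bigr => i _; rewrite !mxE mulrA. Qed.

Lemma dotvZr a u w : dotv w (a *: u) = a * dotv w u.
Proof. by rewrite !(dotvC w) dotvZl. Qed.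

Lemma dotvNl u w : dotv (- u) w = - dotv u w.
Proof. by rewrite -scaleN1r dotvZl mulN1r. Qed.

Lemma dotvNr u w : dotv w (- u) = - dotv w u.
Proof. by rewrite !(dotvC w) dotvNl. Qed.

Lemma dotvBl u v w : dotv (u - v) w = dotv u w - dotv v w.
Proof. by rewrite dotvDl dotvNl. Qed.

Lemma dotvBr u v w : dotv w (u - v) = dotv w u - dotv w v.
Proof. by rewrite !(dotvC w) dotvBl. Qed.

Lemma dotv0l w : dotv 0 w = 0.
Proof. by rewrite /dotv big1 // => i _; rewrite mxE mul0r. Qed.

Lemma dotv_ge0 u : 0 <= dotv u u.
Proof. by apply: sumr_ge0 => i _; rewrite -expr2 sqr_ge0. Qed.

Lemma dotv_eq0 u : (dotv u u == 0) = (u == 0).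
Proof.
apply/idP/eqP => [/eqP uu0|->]; last by rewrite dotv0l.
apply/rowP => i; rewrite mxE; apply/eqP; rewrite -sqrf_eq0 expr2.
by apply/eqP; apply: (psumr_eq0P _ uu0) => // j _; rewrite -expr2 sqr_ge0.
Qed.

Lemma enorm_ge0 u : 0 <= enorm u.
Proof. exact: sqrtr_ge0. Qed.

Lemma enorm_gt0 u : (0 < enorm u) = (u != 0).
Proof. by rewrite sqrtr_gt0 lt_def dotv_eq0 dotv_ge0 andbT. Qed.

Lemma enorm_sqr u : enorm u ^+ 2 = dotv u u.
Proof. by rewrite sqr_sqrtr // dotv_ge0. Qed.

Lemma enormZ a u : enorm (a *: u) = `|a| * enorm u.
Proof.
rewrite /enorm dotvZl dotvZr mulrA -expr2 sqrtrM ?sqr_ge0 //.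
by rewrite sqrtr_sqr.
Qed.

Lemma dotv_le_enorm u v : dotv u v <= enorm u * enorm v.
Proof.
have [->|u0] := eqVneq u 0; first by rewrite dotv0l mulr_ge0 ?enorm_ge0.
have [->|v0] := eqVneq v 0; first by rewrite dotvC dotv0l mulr_ge0 ?enorm_ge0.
have := dotv_ge0 (enorm v *: u - enorm u *: v).
rewrite !(dotvBl, dotvBr, dotvZl, dotvZr) (dotvC v u) -!enorm_sqr.
have := enorm_gt0 u; have := enorm_gt0 v; rewrite u0 v0.
set a := enorm u; set b := enorm v => b_gt0 a_gt0 expansion_ge0.
by rewrite -subr_ge0 -(pmulr_rge0 _ (mulr_gt0 a_gt0 b_gt0)); lra.
Qed.

(* Only the subgradient at the end point enters: f x >= f (x + dx) - gy . dx *)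
Lemma subgradient_upper_bound (f : 'rV[R]_n -> R) (L : R) x dx gx gy :
  is_subgradient f (x + dx) gy -> enorm (gy - gx) <= L * enorm dx ->
  f (x + dx) <= f x + dotv gx dx + L * enorm dx ^+ 2.
Proof.
move=> gy_sub gy_near.
have := gy_sub x; rewrite opprD addNKr dotvNr.
have := dotv_le_enorm (gy - gx) dx; rewrite dotvBl.
have := ler_wpM2r (enorm_ge0 dx) gy_near.
rewrite expr2; lra.
Qed.

End EuclideanNorm.

Section WindowMax.
Variables (R : archiRealFieldType) (F : nat -> R) (M : nat).

Definition window_max k := \big[Num.max/F k]_(j < M.+1) F (k - j)%N.

Lemma le_window_max k j : (j <= M)%N -> F (k - j)%N <= window_max k.
Proof. by move=> jM; apply: (le_bigmax _ _ (@Ordinal M.+1 j jM)). Qed.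

Lemma window_max_le k b :
  (forall j, (j <= M)%N -> F (k - j)%N <= b) -> window_max k <= b.
Proof.
move=> Fb; apply: bigmax_le => [|j _]; last exact: Fb (ltn_ord j).
by have := Fb 0%N (leq0n M); rewrite subn0.
Qed.

Variables (s : R) (K : nat).
Hypothesis s_gt0 : 0 < s.
Hypothesis F_window_decr : forall k, (K <= k)%N -> F k.+1 <= window_max k - s.

Lemma window_max_succ k : (K <= k)%N -> window_max k.+1 <= window_max k.
Proof.
move=> Kk; apply: window_max_le => -[_|j jM].
  by rewrite subn0; apply: le_trans (F_window_decr Kk) _; rewrite gerBl ltW.
by rewrite (subSS j k); apply: le_window_max; exact: ltnW.
Qed.

Lemma window_max_nonincr k i : (K <= k)%N -> window_max (k + i) <= window_max k.
Proof.
move=> Kk; elim: i => [|i IH]; first by rewrite addn0.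
by rewrite addnS; apply: le_trans (window_max_succ _) IH; lia.
Qed.

Lemma window_max_drop k : (K <= k)%N -> window_max (k + M.+1) <= window_max k - s.
Proof.
move=> Kk; apply: window_max_le => j jM.
have -> : (k + M.+1 - j = (k + (M - j)).+1)%N by lia.
apply: le_trans (F_window_decr _) _; first lia.
by rewrite lerD2r window_max_nonincr.
Qed.

Lemma window_max_dropn t : window_max (K + t * M.+1) <= window_max K - s * t%:R.
Proof.
elim: t => [|t IH]; first by rewrite mul0n addn0 mulr0 subr0.
rewrite mulSnr addnA -natr1.
apply: le_trans (window_max_drop (leq_addr _ _)) _.
lra.
Qed.

Lemma unbounded_below_of_window_decr m : exists k, F k < m.
Proof.
pose t := Num.bound `|(window_max K - m) / s|.
have t_big : window_max K - m < s * t%:R.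
  rewrite -ltr_pdivrMl // mulrC; apply: le_lt_trans (ler_norm _) _.
  exact: archi_boundP.
exists (K + t * M.+1)%N.
have := le_window_max (K + t * M.+1) (leq0n M); rewrite subn0.
have := window_max_dropn t; lra.
Qed.

End WindowMax.

Lemma nm_maxE (R : realType) (n : nat) (f : 'rV[R]_n -> R) x M k :
  (M <= k)%N -> nm_max f x M k = window_max (fun i => f (x i)) M k.
Proof. by move=> Mk; rewrite /nm_max (minn_idPr Mk). Qed.

Lemma le_nm_max (R : realType) (n : nat) (f : 'rV[R]_n -> R) x M k :
  f (x k) <= nm_max f x M k.
Proof. exact: bigmax_ge_id. Qed.

Lemma global_lb_of_sublevel_lb (T : Type) (R : realDomainType) (f : T -> R) x0 C :
  (forall y, f y <= f x0 -> C <= f y) -> forall y, Num.min C (f x0) <= f y.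
Proof.
move=> f_sublevel y; rewrite ge_min.
by have [/f_sublevel ->|/ltW ->] := leP (f y) (f x0); rewrite ?orbT.
Qed.

Lemma limn_einf_eq0 (R : realType) (u : R ^nat) :
  (forall k, 0 <= u k) ->
  (forall e, 0 < e -> forall N, exists2 k, (N <= k)%N & u k < e) ->
  limn_einf (fun k => (u k)%:E) = 0%E.
Proof.
move=> u_ge0 u_small; rewrite limn_einf_lim.
suff -> : einfs (fun k => (u k)%:E) = fun=> 0%E by exact: lim_cst.
apply: funext => N; apply: le_anti; apply/andP; split.
  apply/lee_addgt0Pr => e e_gt0; rewrite add0e; apply: ge_ereal_inf.
  have [k Nk uk] := u_small e e_gt0 N.
  by exists (u k)%:E; [exists k | rewrite lee_fin ltW].
by apply: le_ereal_inf_tmp => _ [k _ <-]; rewrite lee_fin.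
Qed.

Section NonmonotoneArmijo.
Variables (R : realType) (n : nat) (f : 'rV[R]_n -> R) (L C : R) (M : nat).
Variables (gamma mu nu eps : R) (eta alpha : nat -> R) (h : nat -> nat).
Variables (x g d : nat -> 'rV[R]_n).

Hypothesis f_subdiff : subdifferentiable f.
Hypothesis L_gt0 : 0 < L.
Hypothesis subgrad_lipschitz : forall y z gy gz, subdiff f y gy -> subdiff f z gz ->
  enorm (gy - gz) <= L * enorm (y - z).
Hypothesis f_ge : forall y, C <= f y.
Hypotheses (gamma_gt0 : 0 < gamma) (gamma_lt1 : gamma < 1).
Hypothesis eta_gt0 : forall k, 0 < eta k.
Hypothesis eta_cvg0 : eta @ \oo --> 0.
Hypothesis g_subgrad : forall k, subdiff f (x k) (g k).
Hypothesis armijo : forall k, armijo_ok f x g d eta M gamma k (h k).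
Hypothesis armijo_min : forall k t, (t < h k)%N -> ~ armijo_ok f x g d eta M gamma k t.
Hypothesis alphaE : forall k, alpha k = (1/2 : R) ^+ h k.
Hypothesis xS : forall k, x k.+1 = x k + alpha k *: d k.
Hypotheses (mu_gt0 : 0 < mu) (nu_gt0 : 0 < nu) (eps_gt0 : 0 < eps).
Hypothesis d_bounds : forall k, mu * enorm (g k) <= enorm (d k) <= nu.
Hypothesis angle_bound : forall k,
  dotv (d k) (g k) / (enorm (d k) * enorm (g k)) <= - eps.

Lemma enorm_dg_gt0 k : 0 < enorm (d k) * enorm (g k).
Proof.
have := angle_bound k; rewrite lt_def mulr_ge0 ?enorm_ge0 // andbT.
by case: eqVneq => // ->; rewrite invr0 mulr0; move: eps_gt0; lra.
Qed.

Lemma enorm_g_gt0 k : 0 < enorm (g k).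
Proof.
rewrite lt_def enorm_ge0 andbT.
by apply: contraTneq (enorm_dg_gt0 k) => ->; rewrite mulr0 ltxx.
Qed.

Lemma enorm_d_gt0 k : 0 < enorm (d k).
Proof.
rewrite lt_def enorm_ge0 andbT.
by apply: contraTneq (enorm_dg_gt0 k) => ->; rewrite mul0r ltxx.
Qed.

Lemma dotv_gd_le k : dotv (g k) (d k) <= - eps * (enorm (d k) * enorm (g k)).
Proof. by rewrite dotvC -ler_pdivrMr ?enorm_dg_gt0. Qed.

Lemma dotv_gd_le_sqr k : dotv (g k) (d k) <= - (eps * mu) * enorm (g k) ^+ 2.
Proof.
apply: le_trans (dotv_gd_le k) _.
have /andP[d_lb _] := d_bounds k.
have : 0 <= eps * enorm (g k) * (enorm (d k) - mu * enorm (g k)).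
  by rewrite mulr_ge0 ?subr_ge0 // ltW // mulr_gt0 // enorm_g_gt0.
lra.
Qed.

Lemma rejected_step_lb k t : ~ armijo_ok f x g d eta M gamma k t ->
  (1 - gamma) * eps * enorm (g k) <= L * (1/2 : R) ^+ t * nu.
Proof.
rewrite /armijo_ok => /negP; rewrite -ltNge.
have [gy gy_sub] := f_subdiff (x k + (1/2 : R) ^+ t *: d k).
set a := (1/2 : R) ^+ t => rejected.
have a_gt0 : 0 < a by rewrite exprn_gt0 // divr_gt0.
have gy_near : enorm (gy - g k) <= L * enorm (a *: d k).
  by have := subgrad_lipschitz gy_sub (g_subgrad k); rewrite addrAC subrr add0r.
have upper := subgradient_upper_bound gy_sub gy_near.
rewrite -/a enormZ gtr0_norm // dotvZr in upper.
have gamma'_gt0 : 0 < 1 - gamma by rewrite subr_gt0.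
have angle_k := ler_wpM2l (ltW (mulr_gt0 gamma'_gt0 a_gt0)) (dotv_gd_le k).
have nm_k := le_nm_max f x M k; have eta_k := eta_gt0 k.
have D_gt0 := enorm_d_gt0 k; have /andP[_ d_le] := d_bounds k.
set D := enorm (d k) in upper angle_k D_gt0 d_le *.
set G := enorm (g k) in angle_k *.
have decrease : (1 - gamma) * eps * G * (a * D) < L * a * D * (a * D) by lra.
rewrite ltr_pM2r ?mulr_gt0 // in decrease.
apply: ltW (lt_le_trans decrease _).
by rewrite ler_wpM2l // mulr_ge0 // ltW.
Qed.

Lemma step_size_lb k :
  alpha k = 1 \/ (1 - gamma) * eps / (2 * L * nu) * enorm (g k) <= alpha k.
Proof.
rewrite alphaE; case E: (h k) => [|t]; [by left | right].
have t_lt : (t < h k)%N by rewrite E.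
have rejected_bound := rejected_step_lb (armijo_min t_lt).
rewrite exprS [X in X <= _]mulrAC ler_pdivrMr ?mulr_gt0 //; lra.
Qed.

Lemma sufficient_decrease k a del : 0 < a <= alpha k -> 0 <= del <= enorm (g k) ->
  f (x k.+1) <= nm_max f x M k - gamma * a * (eps * mu * del ^+ 2) + eta k.
Proof.
move=> /andP[a_gt0 a_le] /andP[del_ge0 del_le].
have := armijo k; rewrite /armijo_ok -alphaE -xS.
have p_le : dotv (g k) (d k) <= - (eps * mu * del ^+ 2).
  apply: le_trans (dotv_gd_le_sqr k) _.
  rewrite mulNr lerN2; apply: ler_wpM2l; first by rewrite mulr_ge0 ?ltW.
  by rewrite ler_sqr ?nnegrE ?enorm_ge0.
have gain_ge0 : 0 <= eps * mu * del ^+ 2 by rewrite mulr_ge0 ?sqr_ge0 // mulr_ge0 // ltW.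
have step_gain : alpha k * dotv (g k) (d k) <= a * - (eps * mu * del ^+ 2).
  apply: le_trans (ler_wpM2l (le_trans (ltW a_gt0) a_le) p_le) _.
  by rewrite !mulrN lerN2 ler_wpM2r.
have := ler_wpM2l (ltW gamma_gt0) step_gain; lra.
Qed.

Lemma enorm_g_not_bounded_away (del : R) N :
  0 < del -> ~ (forall k, (N <= k)%N -> del <= enorm (g k)).
Proof.
move=> del_gt0 g_away.
pose c := (1 - gamma) * eps / (2 * L * nu).
have c_gt0 : 0 < c by rewrite divr_gt0 ?mulr_gt0 ?subr_gt0.
pose a := Num.min 1 (c * del).
have a_gt0 : 0 < a by rewrite lt_min ltr01 mulr_gt0.
have a_le k : (N <= k)%N -> a <= alpha k.
  move=> Nk; have [->|c_le] := step_size_lb k; first by rewrite ge_min lexx.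
  apply: le_trans c_le; rewrite ge_min; apply/orP; right.
  by rewrite ler_pM2l // g_away.
pose s := gamma * a * (eps * mu * del ^+ 2).
have s_gt0 : 0 < s by rewrite !mulr_gt0 // exprn_gt0.
have s2_gt0 : 0 < s / 2 by rewrite divr_gt0.
have [N' _ eta_small] := cvgr0_norm_lt eta eta_cvg0 _ s2_gt0.
have f_window_decr k : (maxn N N' + M <= k)%N ->
    f (x k.+1) <= window_max (fun i => f (x i)) M k - s / 2.
  move=> k_large; rewrite -nm_maxE; last lia.
  have Nk : (N <= k)%N by lia.
  have := @sufficient_decrease k a del.
  rewrite a_gt0 (a_le k Nk) (ltW del_gt0) (g_away k Nk) => /(_ isT isT).
  have : `|eta k| < s / 2 by apply: eta_small => /=; lia.
  rewrite ger0_norm ?(ltW (eta_gt0 k)) // /s; lra.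
have [k fk_lt] := unbounded_below_of_window_decr s2_gt0 f_window_decr C.
by have := f_ge (x k); lra.
Qed.

Lemma liminf_enorm_g_eq0 : limn_einf (fun k => (enorm (g k))%:E) = 0%E.
Proof.
apply: limn_einf_eq0 => [k|e e_gt0 N]; first exact: enorm_ge0.
apply: contrapT => never_small; apply: (enorm_g_not_bounded_away e_gt0 (N := N)).
move=> k Nk; rewrite leNgt; apply/negP => small; apply: never_small.
by exists k.
Qed.

End NonmonotoneArmijo.

Theorem mainTheorem4 (R : realType) (n : nat) (f : 'rV[R]_n -> R)
  (L : R) (x0 : 'rV[R]_n) (C : R) (M : nat) (gamma : R) (eta : nat -> R)
  (x g d : nat -> 'rV[R]_n) (alpha : nat -> R) (h : nat -> nat)
  (mu nu eps : R) :
  subdifferentiable f ->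
  0 < L ->
  (forall y z gy gz, subdiff f y gy -> subdiff f z gz ->
     enorm (gy - gz) <= L * enorm (y - z)) ->
  @compact 'rV[R^o]_n [set y | f y <= f x0] ->
  (forall y, f y <= f x0 -> C <= f y) ->
  0 < gamma < 1 ->
  (forall k, 0 < eta k) ->
  cvgn (series eta) ->
  x 0%N = x0 ->
  (forall k, subdiff f (x k) (g k)) ->
  (forall k, armijo_ok f x g d eta M gamma k (h k)) ->
  (forall k h', (h' < h k)%N -> ~ armijo_ok f x g d eta M gamma k h') ->
  (forall k, alpha k = (1/2 : R) ^+ h k) ->
  (forall k, x k.+1 = x k + alpha k *: d k) ->
  0 < mu -> 0 < nu -> 0 < eps ->
  (forall k, mu * enorm (g k) <= enorm (d k) <= nu) ->
  (forall k, dotv (d k) (g k) / (enorm (d k) * enorm (g k)) <= - eps) ->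
  limn_einf (fun k => (enorm (g k))%:E) = 0%E.
Proof.
move=> f_subdiff L_gt0 lipschitz _ f_sublevel_ge /andP[gamma_gt0 gamma_lt1]
  eta_gt0 eta_summable _ g_subgrad armijo armijo_min alphaE xS
  mu_gt0 nu_gt0 eps_gt0 d_bounds angle_bound.
exact: (liminf_enorm_g_eq0 f_subdiff L_gt0 lipschitz
  (global_lb_of_sublevel_lb f_sublevel_ge) gamma_gt0 gamma_lt1 eta_gt0
  (cvg_series_cvg_0 eta_summable) g_subgrad armijo armijo_min alphaE xS
  mu_gt0 nu_gt0 eps_gt0 d_bounds angle_bound).
Qed.
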